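(* Let $p$ be a prime and $\alpha=(\ell_1,\dots,\ell_m)$ a type, and let $A(\alpha)=\prod_{i=1}^m\mathbb{Z}/p^{\ell_i}\mathbb{Z}$. (a) If $\{\mathfrak z_1,\dots,\mathfrak z_r\}$ is a minimal generating set of $A(\alpha)$ (i.e. a generating set no proper subset of which generates) with $|\mathfrak z_i|=p^{d_i}$ and $\ell_1=d_1\ge d_2\ge\cdots\ge d_r\ge 1$, then $r=m$ and $d_i\ge \ell_i$ for all $i$. (b) Conversely, given integers $d_1,\dots,d_m$ with $\ell_1=d_1\ge\cdots\ge d_m\ge 1$ and $d_i\ge\ell_i$ for all $i$, there exists a minimal generating set $\{\mathfrak z_1,\dots,\mathfrak z_m\}$ of $A(\alpha)$ with $|\mathfrak z_i|=p^{d_i}$ for all $i$.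
   Context: A type is a tuple of integers $(k_1,\dots,k_n)$ with $k_1\ge\cdots\ge k_n\ge1$. For $\mathfrak x$ in a group, $|\mathfrak x|$ denotes its order. *)

From HB Require Import structures.
From mathcomp Require Import all_boot all_fingroup.
Set Implicit Arguments. Unset Strict Implicit. Unset Printing Implicit Defensive.
Local Open Scope group_scope.

Definition is_type (a : seq nat) : bool :=
  sorted geq a && all (fun k => 0 < k) a.

(* G is (isomorphic to) A(a) = prod_{i} Z/p^{a_i}Z : G is the internal direct
   product of cyclic subgroups <[x_i]> with #[x_i] = p ^ a_i. *)
Definition is_A (gT : finGroupType) (p : nat) (a : seq nat) (G : {set gT}) : Prop :=
  exists x : 'I_(size a) -> gT,
    \big[dprod/1]_(i < size a) <[x i]> = G /\
    forall i : 'I_(size a), #[x i] = (p ^ nth 0 a i)%N.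

Definition min_gen_set (gT : finGroupType) (S G : {set gT}) : Prop :=
  <<S>> = G /\ forall T : {set gT}, T \proper S -> <<T>> <> G.

From mathcomp Require Import all_boot all_fingroup.
From mathcomp Require Import cyclic pgroup abelian maximal.
Set Implicit Arguments. Unset Strict Implicit. Unset Printing Implicit Defensive.
Local Open Scope group_scope.

(* Write G as the direct product of cyclic groups <[b_i]> of orders p ^ a_i.
   Then 'Mho^n(G) is the direct product of the <[b_i ^+ p ^ n]>, so its rank
   is the number of i with n < a_i; on the other hand 'Mho^n(G) is generated by
   the (p ^ n)-th powers of any generating set z of G, so its rank is at most
   the number of z_i of order greater than p ^ n.  Comparing these counts for
   all n forces a_i <= d_i once both sequences are sorted.  A generating set has
   at least 'r(G) = size a elements, and a minimal one has at most that many,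
   its elements being independent modulo the Frattini subgroup.  Conversely,
   z_0 = b_0 and z_i = b_i * b_0 ^+ p ^ (a_0 - d_i) generate G, have the
   prescribed orders, and being only 'r(G) many they generate minimally. *)

Lemma sorted_geq_nth (s : seq nat) i k :
  sorted geq s -> i <= k -> k < size s -> nth 0 s k <= nth 0 s i.
Proof.
move=> ss ik ks.
have geq_trans : transitive geq by move=> ? ? ? h1 h2; apply: leq_trans h2 h1.
by apply: (sorted_leq_nth geq_trans leqnn 0 ss) => //; apply: leq_ltn_trans ks.
Qed.

Lemma leq_nth_sorted_geq (s t : seq nat) :
  sorted geq s -> sorted geq t ->
  (forall j, count (fun k => j < k) s <= count (fun k => j < k) t) ->
  forall i, i < size s -> nth 0 s i <= nth 0 t i.
Proof.
move=> ss st le_count i lt_is; rewrite leqNgt; apply/negP => lt_ts.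
set P := fun k => nth 0 t i < k.
have count_s : i.+1 <= count P s.
  rewrite -(cat_take_drop i.+1 s) count_cat (eq_in_count (a2 := predT)).
    by rewrite count_predT size_take_min (minn_idPl lt_is) leq_addr.
  move=> k /(nthP 0)[q]; rewrite size_take_min => /leq_trans/(_ (geq_minl _ _)) lt_qi <-.
  by rewrite nth_take // /P /= (leq_trans lt_ts) // sorted_geq_nth.
have count_t : count P t <= i.
  rewrite -(cat_take_drop i t) count_cat (@eq_in_count _ P pred0 (drop i t)).
    by rewrite count_pred0 addn0 (leq_trans (count_size _ _)) // size_take_min geq_minl.
  move=> k /(nthP 0)[q]; rewrite size_drop nth_drop => lt_q <-.
  by rewrite /P /= ltnNge sorted_geq_nth // ?leq_addr // -ltn_subRL.
by have := leq_trans count_s (leq_trans (le_count _) count_t); rewrite ltnn.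
Qed.

Section FiniteGroup.

Variable gT : finGroupType.
Implicit Types (x y : gT) (s b : seq gT) (S T : {set gT}) (G H K N : {group gT}).

Lemma expg_prod I (r : seq I) (F : I -> gT) n K :
  abelian K -> (forall i, F i \in K) ->
  (\prod_(i <- r) F i) ^+ n = \prod_(i <- r) F i ^+ n.
Proof.
move=> cKK FK; elim: r => [|i r IHr]; first by rewrite !big_nil expg1n.
rewrite !big_cons expgMn ?IHr //; apply: (centsP cKK); first exact: FK.
by apply: group_prod => j _; apply: FK.
Qed.

Lemma orderM_TI x y :
  commute x y -> <[x]> :&: <[y]> = 1 -> #[x * y] = lcmn #[x] #[y].
Proof.
move=> cxy tixy; apply/eqP; rewrite eqn_dvd order_dvdn expgMn //.
have /eqP-> : x ^+ lcmn #[x] #[y] == 1 by rewrite -order_dvdn dvdn_lcml.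
have /eqP-> : y ^+ lcmn #[x] #[y] == 1 by rewrite -order_dvdn dvdn_lcmr.
rewrite mulg1 eqxx dvdn_lcm !order_dvdn.
have /eqP := expg_order (x * y); rewrite expgMn // => xy1.
rewrite mulg_eq1 in xy1.
have x1 : x ^+ #[x * y] = 1.
  apply/set1gP; rewrite -tixy inE mem_cycle (eqP xy1).
  by rewrite groupV mem_cycle.
by move: xy1; rewrite x1 eq_sym eq_invg1 eqxx.
Qed.

Lemma order_mul_expg p x y c d n :
  prime p -> commute x y -> <[x]> :&: <[y]> = 1 ->
  #[x] = (p ^ c)%N -> #[y] = (p ^ n)%N -> c <= d <= n ->
  #[x * y ^+ (p ^ (n - d))] = (p ^ d)%N.
Proof.
move=> p_pr cxy tixy ox oy /andP[le_cd le_dn].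
have tixy' : <[x]> :&: <[y ^+ (p ^ (n - d))]> = 1.
  by apply/trivgP; rewrite -tixy setIS // cycleX.
rewrite orderM_TI //; last exact: commuteX.
rewrite (orderXexp _ oy) subKn // ox.
by apply/lcmn_idPr; rewrite dvdn_exp2l.
Qed.

Lemma rank_le_card_gen S : abelian <<S>> -> 'r(<<S>>) <= #|S|.
Proof. by move=> cSS; rewrite -grank_abelian ?grank_min. Qed.

Lemma Mho_gen_abelian (p : nat) n G S :
  p.-group G -> abelian G -> <<S>> = G ->
  'Mho^n(G) = <<[set x ^+ (p ^ n) | x in S]>>.
Proof.
move=> pG cGG defG; have SG : S \subset G by rewrite -defG subset_gen.
apply/eqP; rewrite eqEsubset; apply/andP; split; last first.
  rewrite gen_subG; apply/subsetP=> _ /imsetP[x Sx ->].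
  by rewrite Mho_p_elt ?(mem_p_elt pG) ?(subsetP SG).
rewrite (MhoEabelian n pG cGG).
apply/subsetP=> _ /imsetP[y + ->]; rewrite -{1}defG => /gen_prodgP[k [f Sf ->]].
have fG i : f i \in G by rewrite -defG mem_gen.
rewrite (expg_prod _ _ cGG fG); apply: group_prod => i _.
by rewrite mem_gen //; apply/imsetP; exists (f i).
Qed.

Lemma rank_Mho_le_count (p : nat) n G s :
  p.-group G -> abelian G -> <<[set x in s]>> = G ->
  'r('Mho^n(G)) <= count (fun x => x ^+ (p ^ n) != 1) s.
Proof.
set P := fun x => x ^+ (p ^ n) != 1 => pG cGG defG.
set T := [set x ^+ (p ^ n) | x in [set x in filter P s]].
have sMT : 'Mho^n(G) \subset <<T>>.
  rewrite (Mho_gen_abelian n pG cGG defG) gen_subG.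
  apply/subsetP=> _ /imsetP[x + ->]; rewrite inE => sx.
  have [Px|] := boolP (P x); last by rewrite negbK => /eqP->.
  by rewrite mem_gen //; apply/imsetP; exists x; rewrite // inE mem_filter Px.
have cTT : abelian <<T>>.
  apply: abelianS cGG; rewrite gen_subG; apply/subsetP=> _ /imsetP[x + ->].
  by rewrite inE mem_filter -defG => /andP[_ sx]; rewrite groupX // mem_gen ?inE.
apply: leq_trans (rankS sMT) _; apply: leq_trans (rank_le_card_gen cTT) _.
apply: leq_trans (leq_imset_card _ _) _; rewrite -size_filter cardsE.
exact: card_size.
Qed.

Lemma count_expg_neq1 p n s (d : seq nat) :
  prime p -> size d = size s ->
  (forall i, i < size s -> #[nth 1 s i] = (p ^ nth 0 d i)%N) ->
  count (fun x => x ^+ (p ^ n) != 1) s = count (fun k => n < k) d.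
Proof.
move=> p_pr; elim: s d => [|x s IHs] [|k d] //= [sz_ds] od.
rewrite (IHs d sz_ds) => [|i]; last exact: (od i.+1).
by rewrite -order_dvdn (od 0) // dvdn_Pexp2l ?prime_gt1 // -ltnNge.
Qed.

Lemma bigdprod_cycle_gen b K :
  \big[dprod/1]_(y <- b) <[y]> = K -> <<[set y in b]>> = K.
Proof.
move/bigdprodWY <-; rewrite bigcup_seq; apply/eqP.
rewrite eqEsubset !gen_subG; apply/andP; split.
  apply/subsetP=> y; rewrite inE => yb.
  by rewrite mem_gen //; apply/bigcupP; exists y; rewrite ?cycle_id.
by apply/bigcupsP=> y yb; rewrite cycle_subG mem_gen // inE.
Qed.

Lemma bigdprod_cycle_pgroup_abelian (p : nat) b K :
  all (p_elt p) b -> \big[dprod/1]_(y <- b) <[y]> = K -> p.-group K && abelian K.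
Proof.
elim: b K => [|y b IHb] K /=; first by rewrite big_nil => _ <-; rewrite pgroup1 abelian1.
case/andP=> py pb; rewrite big_cons; case/dprodP=> [[_ H _ defH]] <-; rewrite defH => cyH _.
have /andP[pH cHH] := IHb H pb defH.
by rewrite pgroupM pH abelianM cycle_abelian cHH cyH !andbT.
Qed.

Lemma p_rank_bigdprod_cycle (p : nat) b K :
  all (p_elt p) b -> \big[dprod/1]_(y <- b) <[y]> = K ->
  'r_p(K) = count (predC1 1) b.
Proof.
elim: b K => [|y b IHb] K /=; first by rewrite big_nil => _ <-; rewrite p_rank1.
case/andP=> py pb; rewrite big_cons => defK.
have [[_ H _ defH] _ _ _] := dprodP defK; rewrite defH in defK.
by rewrite -(p_rank_dprod p defK) (IHb H pb defH) -(rank_pgroup py) rank_cycle.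
Qed.

Lemma Mho_bigdprod_cycle (p : nat) n b K :
  all (p_elt p) b -> \big[dprod/1]_(y <- b) <[y]> = K ->
  \big[dprod/1]_(y <- b) <[y ^+ (p ^ n)]> = 'Mho^n(K).
Proof.
elim: b K => [|y b IHb] K /=; first by rewrite !big_nil => _ <-; rewrite Mho1.
case/andP=> py pb; rewrite !big_cons => defK.
have [[_ H _ defH] _ _ _] := dprodP defK; rewrite defH in defK.
by rewrite (IHb H pb defH) -(Mho_p_cycle n py); apply: Mho_dprod.
Qed.

Lemma p_rank_Mho_bigdprod_cycle (p : nat) n b K :
  all (p_elt p) b -> \big[dprod/1]_(y <- b) <[y]> = K ->
  'r_p('Mho^n(K)) = count (fun y => y ^+ (p ^ n) != 1) b.
Proof.
move=> pb defK; have := Mho_bigdprod_cycle n pb defK.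
rewrite -(big_map (fun y => y ^+ (p ^ n)) xpredT cycle).
move/(p_rank_bigdprod_cycle (p := p)) ->; first by rewrite count_map.
by rewrite all_map; apply: sub_all pb => y py; apply: p_eltX.
Qed.

Lemma bigdprod_cycle_TI x b K :
  \big[dprod/1]_(y <- x :: b) <[y]> = K -> {in b, forall y, <[y]> :&: <[x]> = 1}.
Proof.
rewrite big_cons => /dprodP[[_ H _ defH] _ _ tiH] y yb.
have sYH : <[y]> \subset H.
  by rewrite -(bigdprod_cycle_gen defH) cycle_subG mem_gen // inE.
by apply/trivgP; rewrite -tiH defH /= setIC setIS.
Qed.

Lemma card_proper_pgroup (p : nat) H K :
  prime p -> p.-group K -> H \proper K -> (p * #|H| <= #|K|)%N.
Proof.
move=> p_pr pK /andP[sHK not_sKH].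
have [e idxHK] := p_natP (pnat_dvd (dvdn_indexg K H) pK).
have e_gt0 : 0 < e.
  by rewrite lt0n; apply: contraNneq not_sKH => e0; rewrite -indexg_eq1 idxHK e0.
rewrite -(Lagrange sHK) mulnC leq_mul2l idxHK -{1}(expn1 p) leq_exp2l ?prime_gt1 //.
by rewrite e_gt0 orbT.
Qed.

Lemma card_join_independent (p : nat) N S :
  prime p -> p.-group (N <*> <<S>>) ->
  {in S, forall x, x \notin N <*> <<S :\ x>>} ->
  (p ^ #|S| * #|N| <= #|N <*> <<S>>|)%N.
Proof.
move=> p_pr; move cardS: #|S| => n; elim: n S cardS => [|n IHn] S cardS pNS indS.
  by rewrite (cards0_eq cardS) gen0 joingG1 mul1n.
have [x Sx] : exists x, x \in S by apply/set0Pn; rewrite -cards_eq0 cardS.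
have cardSx : #|S :\ x| = n by move: cardS; rewrite (cardsD1 x) Sx => -[].
have sNSx : N <*> <<S :\ x>> \subset N <*> <<S>>.
  by rewrite !joing_idr genS ?setUS ?subsetDl.
have pNSx : p.-group (N <*> <<S :\ x>>) := pgroupS sNSx pNS.
have indSx : {in S :\ x, forall y, y \notin N <*> <<S :\ x :\ y>>}.
  move=> y /setD1P[_ Sy]; apply: contra (indS y Sy); apply: subsetP.
  by rewrite !joing_idr genS ?setUS ?setSD ?subsetDl.
have ltNSx : N <*> <<S :\ x>> \proper N <*> <<S>>.
  rewrite properEneq sNSx andbT; apply: contraNneq (indS x Sx) => ->.
  by rewrite (subsetP (joing_subr _ _)) ?mem_gen.
rewrite expnS -mulnA; apply: leq_trans (card_proper_pgroup p_pr pNS ltNSx).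
by rewrite leq_mul2l IHn ?orbT.
Qed.

Lemma card_min_gen_set_le_rank (p : nat) G S :
  prime p -> p.-group G -> abelian G -> min_gen_set S G -> #|S| <= 'r(G).
Proof.
move=> p_pr pG cGG [defG minS].
have joinPhiS : 'Phi(G) <*> <<S>> = G by rewrite defG; apply/joing_idPr/Phi_sub.
have indS : {in S, forall x, x \notin 'Phi(G) <*> <<S :\ x>>}.
  move=> x Sx; apply/negP=> PhiSx; apply: (minS (S :\ x)); first exact: properD1.
  rewrite -[<<S :\ x>>]genGid; apply: Phi_nongen; apply/eqP.
  rewrite eqEsubset join_subG Phi_sub -{1 2}defG genS ?subsetDl //= gen_subG.
  apply/subsetP=> y Sy.
  have [-> // | nyx] := eqVneq y x.
  by rewrite (subsetP (joing_subr _ _)) // mem_gen // !inE nyx.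
have := card_join_independent p_pr _ indS; rewrite joinPhiS => /(_ pG).
rewrite -(Lagrange (Phi_sub G)) -card_quotient ?normal_norm ?Phi_normal // mulnC.
rewrite leq_pmul2l ?cardG_gt0 // (card_pgroup (quotient_pgroup _ pG)).
rewrite -(rank_abelem (Phi_quotient_abelem pG)) leq_exp2l ?prime_gt1 // => le_S_rQ.
exact: leq_trans le_S_rQ (quotient_rank_abelian _ cGG).
Qed.

Lemma min_gen_set_of_rank G s :
  abelian G -> <<[set x in s]>> = G -> size s <= 'r(G) ->
  uniq s /\ min_gen_set [set x in s] G.
Proof.
move=> cGG defG le_s_rG.
have le_rG S : <<S>> = G -> 'r(G) <= #|S|.
  by move=> defGS; rewrite -defGS rank_le_card_gen // defGS.
have card_s : #|[set x in s]| = size s.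
  apply/eqP; rewrite eqn_leq (leq_trans le_s_rG (le_rG _ defG)) andbT.
  by rewrite cardsE card_size.
split; first by apply/card_uniqP; rewrite -cardsE.
split=> // T /proper_card ltTs defGT.
by have := leq_ltn_trans (le_rG T defGT) ltTs; rewrite card_s ltnNge le_s_rG.
Qed.

Lemma gen_cons_mulr_expg x (ws : seq (gT * nat)) :
  <<[set y in x :: [seq w.1 * x ^+ w.2 | w <- ws]]>> = <<[set y in x :: unzip1 ws]>>.
Proof.
apply/eqP; rewrite eqEsubset !gen_subG; apply/andP; split; apply/subsetP=> y.
  rewrite !inE => /predU1P[-> | /mapP[w ws_w ->]]; first by rewrite mem_gen ?inE ?eqxx.
  rewrite groupM ?groupX ?mem_gen // !inE ?eqxx //.
  by rewrite orbC (map_f fst ws_w).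
rewrite !inE => /predU1P[-> | /mapP[w ws_w ->]]; first by rewrite mem_gen ?inE ?eqxx.
have xS : x \in <<[set y in x :: [seq w.1 * x ^+ w.2 | w <- ws]]>>.
  by rewrite mem_gen // inE mem_head.
rewrite -(mulgK (x ^+ w.2) w.1) groupM ?groupV ?groupX // mem_gen // inE.
by rewrite in_cons (map_f (fun w => w.1 * x ^+ w.2) ws_w) orbT.
Qed.

End FiniteGroup.

Section TypeA.

Variables (gT : finGroupType) (p : nat) (a : seq nat) (b : seq gT) (G : {group gT}).
Hypotheses (p_pr : prime p) (sorted_a : sorted geq a) (a_gt0 : all (fun k => 0 < k) a).
Hypotheses (size_b : size b = size a) (defG : \big[dprod/1]_(y <- b) <[y]> = G).
Hypothesis order_b : forall i, i < size a -> #[nth 1 b i] = (p ^ nth 0 a i)%N.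

Let pb : all (p_elt p) b.
Proof.
apply/(all_nthP 1)=> i; rewrite size_b => lt_ia.
by rewrite /p_elt order_b // pnatX pnat_id.
Qed.

Let pG : p.-group G. Proof. by case/andP: (bigdprod_cycle_pgroup_abelian pb defG). Qed.
Let cGG : abelian G. Proof. by case/andP: (bigdprod_cycle_pgroup_abelian pb defG). Qed.

Lemma rank_Mho_type n : 'r('Mho^n(G)) = count (fun k => n < k) a.
Proof.
rewrite (rank_pgroup (pgroupS (Mho_sub n G) pG)) (p_rank_Mho_bigdprod_cycle n pb defG).
by apply: count_expg_neq1; rewrite ?size_b.
Qed.

Lemma rank_type : 'r(G) = size a.
Proof.
rewrite -(Mho0 G) rank_Mho_type -count_predT.
by apply: eq_in_count; apply/allP.
Qed.

Lemma size_min_gen_set_type z :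
  uniq z -> min_gen_set [set x in z] G -> size z = size a.
Proof.
move=> uniq_z minz; have [defGz _] := minz; apply/eqP.
rewrite -rank_type eqn_leq -(card_uniqP uniq_z) -cardsE.
by rewrite (card_min_gen_set_le_rank p_pr pG cGG minz) -{1}defGz rank_le_card_gen ?defGz.
Qed.

Lemma type_leq_orders z d :
  <<[set x in z]>> = G -> size d = size z ->
  (forall i, i < size z -> #[nth 1 z i] = (p ^ nth 0 d i)%N) -> sorted geq d ->
  forall i, i < size a -> nth 0 a i <= nth 0 d i.
Proof.
move=> defGz size_d order_z sorted_d; apply: leq_nth_sorted_geq => // n.
rewrite -rank_Mho_type -(count_expg_neq1 n p_pr size_d order_z).
exact: rank_Mho_le_count.
Qed.

Lemma min_gen_set_type_exists d :
  size d = size a -> nth 0 a 0 = nth 0 d 0 -> sorted geq d ->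
  (forall i, i < size a -> nth 0 a i <= nth 0 d i) ->
  exists z, [/\ uniq z, size z = size a, min_gen_set [set x in z] G &
                forall i, i < size a -> #[nth 1 z i] = (p ^ nth 0 d i)%N].
Proof.
move=> size_d a0_d0 sorted_d le_ad.
have defGb := bigdprod_cycle_gen defG.
have rank_b : size b <= 'r(G) by rewrite size_b rank_type.
case def_b: b defGb rank_b => [|x b'] defGb rank_b.
  have [_ minb] := min_gen_set_of_rank cGG defGb rank_b.
  by exists [::]; split; rewrite // -size_b def_b.
case def_d: d size_d a0_d0 => [|e d'] size_d a0_e; first by rewrite -size_b def_b in size_d.
pose ws := mkseq (fun i => (nth 1 b' i, (p ^ (e - nth 0 d' i))%N)) (size b').
pose z := x :: [seq w.1 * x ^+ w.2 | w <- ws].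
have size_z : size z = size a by rewrite -size_b def_b /= size_map size_mkseq.
have defGz : <<[set y in z]>> = G.
  by rewrite gen_cons_mulr_expg /unzip1 /ws /mkseq -map_comp -/(mkseq _ _) mkseq_nth.
have order_xb i : i <= size b' -> #[nth 1 (x :: b') i] = (p ^ nth 0 a i)%N.
  by move=> le_ib'; rewrite -def_b order_b // -size_b def_b.
have rank_z : size z <= 'r(G) by rewrite size_z rank_type.
have [uniq_z minz] := min_gen_set_of_rank cGG defGz rank_z.
exists z; split=> // -[_ | i]; first by rewrite (order_xb 0) ?a0_e.
rewrite -size_b def_b /= ltnS => lt_ib'; rewrite (nth_map (1, 0%N)) ?size_mkseq //.
rewrite nth_mkseq //=; apply: order_mul_expg => //.
- apply: (centsP cGG); rewrite ?groupX // -defGb mem_gen // inE ?mem_head //.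
  by rewrite in_cons mem_nth ?orbT.
- apply: (bigdprod_cycle_TI (x := x) (b := b') (K := G)); first by rewrite -def_b.
  exact: mem_nth.
- exact: (order_xb i.+1).
- by rewrite (order_xb 0) ?a0_e.
have lt_ia : i.+1 < size a by rewrite -size_b def_b.
have := sorted_geq_nth sorted_d (leq0n i.+1).
rewrite def_d size_d => /(_ lt_ia) /= le_de.
by have := le_ad i.+1 lt_ia; rewrite def_d /= => ->.
Qed.

End TypeA.

Lemma is_A_seq (gT : finGroupType) (p : nat) (a : seq nat) (G : {group gT}) :
  is_A p a G ->
  exists b : seq gT, [/\ size b = size a, \big[dprod/1]_(y <- b) <[y]> = G &
    forall i, i < size a -> #[nth 1 b i] = (p ^ nth 0 a i)%N].
Proof.
case=> x [defG order_x]; exists [seq x i | i <- enum 'I_(size a)].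
split; first by rewrite size_map size_enum_ord.
  by rewrite big_map big_enum.
move=> i lt_ia; rewrite (nth_map (Ordinal lt_ia)) ?size_enum_ord //.
by rewrite order_x nth_enum_ord.
Qed.

Theorem theorem3p1 (p : nat) (a : seq nat) (gT : finGroupType) (G : {group gT}) :
  prime p -> is_type a -> is_A p a G ->
  (* (a) *)
  (forall (z : seq gT) (d : seq nat),
      uniq z -> min_gen_set [set x in z] G ->
      size d = size z ->
      (forall i, (i < size z)%N -> #[nth 1 z i] = (p ^ nth 0 d i)%N) ->
      nth 0 a 0 = nth 0 d 0 -> sorted geq d -> all (fun k => 0 < k)%N d ->
      size z = size a /\ (forall i, (i < size a)%N -> nth 0 a i <= nth 0 d i)%N)
  /\
  (* (b) *)
  (forall d : seq nat,
      size d = size a ->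
      nth 0 a 0 = nth 0 d 0 -> sorted geq d -> all (fun k => 0 < k)%N d ->
      (forall i, (i < size a)%N -> nth 0 a i <= nth 0 d i)%N ->
      exists z : seq gT,
        [/\ uniq z, size z = size a, min_gen_set [set x in z] G &
            forall i, (i < size a)%N -> #[nth 1 z i] = (p ^ nth 0 d i)%N]).
Proof.
move=> p_pr /andP[sorted_a a_gt0] /is_A_seq[b [size_b defG order_b]]; split.
  move=> z d uniq_z minz size_d order_z _ sorted_d _; split.
    exact: (size_min_gen_set_type p_pr a_gt0 size_b defG order_b).
  have [defGz _] := minz.
  exact: (type_leq_orders p_pr sorted_a size_b defG order_b defGz).
move=> d size_d a0_d0 sorted_d _.
exact: (min_gen_set_type_exists p_pr a_gt0 size_b defG order_b).
Qed.
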